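(* In the setting of the context (analytic vector field $f$ with Jacobian $A$ having distinct eigenvalues, truncation order $N_{\max}\ge 1$ with the non-resonance condition, fixed index sets $S_N$, fixed perturbation amplitude $\alpha\neq0$), let $(\phi_j,\psi_j)_{j=1}^n$ and $(\phi'_j,\psi'_j)_{j=1}^n$ be two eigenvector choices with $\theta$-factors $\theta_j$ and $\theta'_j$. If $\theta_j=\theta'_j$ for all $j\in\{1,\dots,n\}$, then for every state index $k\in\{1,\dots,n\}$, every combination order $M$ with $1\le M\le N_{\max}$ and every tuple of mode indices $(r_1,\dots,r_M)\in\{1,\dots,n\}^M$, the nonlinear participation factors computed from the two choices coincide: $p_{k,r_1\cdots r_M}=p'_{k,r_1\cdots r_M}$. That is, the nonlinear participation factors of all orders, for linear modes ($M=1$) and combination modes ($M\ge2$), are uniquely determined whenever all $\theta$-factors are uniquely determined.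
   Context: Let $f:\mathbb{R}^n\to\mathbb{R}^n$ be analytic with $f(0)=0$, and write its Taylor expansion at $0$ as $f_j(x)=\sum_{i}a_{ji}x_i+\sum_{N\ge2}\sum_{\alpha_1,\dots,\alpha_N=1}^n a_{j,\alpha_1\cdots\alpha_N}x_{\alpha_1}\cdots x_{\alpha_N}$. Let $A=(a_{ji})$ be the Jacobian at $0$, assumed to have $n$ distinct eigenvalues $\lambda_1,\dots,\lambda_n\in\mathbb{C}$. For each $i$ fix a right eigenvector $\hat\phi_i$ (column) and a left eigenvector $\hat\psi_i$ (row) of $A$ for $\lambda_i$, each of unit 2-norm, and set $c_i:=\hat\psi_i\hat\phi_i\neq0$ (non-conjugated product). An eigenvector choice is a tuple $(\phi_i,\psi_i)_{i=1}^n$ with $\phi_i=\sigma_i\hat\phi_i$, $\psi_i=\xi_i\hat\psi_i$, $\sigma_i,\xi_i\in\mathbb{C}\setminus\{0\}$; its $\theta$-factors are $\theta_i:=\psi_i\phi_i=\sigma_i\xi_ic_i$. Write $\phi_{ki}$, $\psi_{ik}$ for the $k$-th entries of $\phi_i$, $\psi_i$. Fix a truncation order $N_{\max}\ge1$ and assume non-resonance: $\lambda_{r_1}+\dots+\lambda_{r_N}-\lambda_i\neq0$ for all $2\le N\le N_{\max}$, all $i$ and all $(r_1,\dots,r_N)$. Given an eigenvector choice, define for $2\le N\le N_{\max}$ the normal-form coefficients $h^i_{r_1\cdots r_N}:=\dfrac{\sum_{j=1}^n\sum_{\alpha_1,\dots,\alpha_N=1}^n\psi_{ij}\,a_{j,\alpha_1\cdots\alpha_N}\,\phi_{\alpha_1r_1}\cdots\phi_{\alpha_Nr_N}}{\lambda_{r_1}+\dots+\lambda_{r_N}-\lambda_i}$,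 and for $N=1$ set $h^i_r:=1$ if $r=i$ and $0$ otherwise. For each $2\le N\le N_{\max}$ fix an index set $S_N\subseteq\{1,\dots,n\}^N$ (independent of the eigenvector choice; e.g. in second order the paper uses $\{(p,q):p\le q\}$). Fix a perturbation amplitude $\alpha\in\mathbb{R}\setminus\{0\}$ (initial state $\alpha e_k$). Define $\mu_{lk}:=\alpha\psi_{lk}-\sum_{N=2}^{N_{\max}}\alpha^N\sum_{(r_1,\dots,r_N)\in S_N}h^l_{r_1\cdots r_N}\psi_{r_1k}\cdots\psi_{r_Nk}$, and the nonlinear participation factor of state $k$ in the (linear if $M=1$, combination if $M\ge2$) mode $(r_1,\dots,r_M)$, $1\le M\le N_{\max}$, as $p_{k,r_1\cdots r_M}:=\sum_{i=1}^n\phi_{ki}\,h^i_{r_1\cdots r_M}\,\mu_{r_1k}\cdots\mu_{r_Mk}$ (for $M=1$ this is $p_{kr}=\phi_{kr}\mu_{rk}$). *)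

From HB Require Import structures.
From mathcomp Require Import all_boot all_order all_algebra.
From mathcomp Require Import reals.
From mathcomp Require Import complex.
Set Implicit Arguments. Unset Strict Implicit. Unset Printing Implicit Defensive.
Import Order.TTheory GRing.Theory Num.Theory.
Local Open Scope ring_scope.

Definition toC (R : realType) (x : R) : R[i] := (x%:C)%C.

(* Conventions: indices 1..n are 'I_n.
   [A : 'M[R]_n] is the Jacobian (first-order Taylor coefficients a_{ji} = A j i).
   [a N j al] is the real Taylor coefficient a_{j,al_1...al_N} (N >= 2),
   the multi-index being a tuple al : N.-tuple 'I_n.
   [Phi k i] = phi_{ki} (k-th entry of the right eigenvector phi_i),
   [Psi i k] = psi_{ik} (k-th entry of the left eigenvector psi_i). *)

Definition choicePhi (R : realType) (n : nat) (hphi : 'I_n -> 'cV[R[i]]_n)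
  (sigma : 'I_n -> R[i]) : 'M[R[i]]_n :=
  \matrix_(k < n, i < n) (sigma i * hphi i k 0).
Definition choicePsi (R : realType) (n : nat) (hpsi : 'I_n -> 'rV[R[i]]_n)
  (xi : 'I_n -> R[i]) : 'M[R[i]]_n :=
  \matrix_(i < n, k < n) (xi i * hpsi i 0 k).

(* theta_i := psi_i phi_i (non-conjugated product) *)
Definition theta (R : realType) (n : nat) (Phi Psi : 'M[R[i]]_n) (i : 'I_n) : R[i] :=
  \sum_(k < n) Psi i k * Phi k i.

Definition resdenom (R : realType) (n : nat) (lam : 'I_n -> R[i]) (N : nat)
  (i : 'I_n) (r : N.-tuple 'I_n) : R[i] :=
  \sum_(t < N) lam (tnth r t) - lam i.

Definition hcoef (R : realType) (n : nat) (a : forall N : nat, 'I_n -> N.-tuple 'I_n -> R)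
  (lam : 'I_n -> R[i]) (Phi Psi : 'M[R[i]]_n) (N : nat) (i : 'I_n)
  (r : N.-tuple 'I_n) : R[i] :=
  if N == 1%N then ((nth i r 0 == i)%:R)
  else (\sum_(j < n) \sum_(al : N.-tuple 'I_n)
          Psi i j * toC (a N j al) * \prod_(t < N) Phi (tnth al t) (tnth r t))
       / resdenom lam i r.

(* mu_{lk} for initial state alpha e_k *)
Definition mu (R : realType) (n : nat) (a : forall N : nat, 'I_n -> N.-tuple 'I_n -> R)
  (lam : 'I_n -> R[i]) (Phi Psi : 'M[R[i]]_n) (Nmax : nat)
  (S : forall N : nat, {set N.-tuple 'I_n}) (alpha : R) (l k : 'I_n) : R[i] :=
  toC alpha * Psi l k
  - \sum_(2 <= N < Nmax.+1) toC alpha ^+ N *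
      \sum_(r : N.-tuple 'I_n | r \in S N)
         hcoef a lam Phi Psi l r * \prod_(t < N) Psi (tnth r t) k.

Definition npf (R : realType) (n : nat) (a : forall N : nat, 'I_n -> N.-tuple 'I_n -> R)
  (lam : 'I_n -> R[i]) (Phi Psi : 'M[R[i]]_n) (Nmax : nat)
  (S : forall N : nat, {set N.-tuple 'I_n}) (alpha : R) (k : 'I_n) (M : nat)
  (r : M.-tuple 'I_n) : R[i] :=
  \sum_(i < n) Phi k i * hcoef a lam Phi Psi i r
               * \prod_(t < M) mu a lam Phi Psi Nmax S alpha (tnth r t) k.

(* Multiplying each phi_i by T_i and each psi_i by T_i^-1 multiplies h^i_r by
   (prod_t T_(r_t)) / T_i (also for N = 1, where h is a Kronecker delta), hence mu_(lk) by
   T_l^-1, and all these factors cancel in p_(k,r) = sum_i phi_(ki) h^i_r prod_t mu_(r_t k).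
   Two eigenvector choices with equal theta-factors are related by such a rescaling, with
   T_i = sigma'_i / sigma_i: indeed theta_i = sigma_i xi_i c_i, and c_i is nonzero because a
   left eigenvector is orthogonal to the right eigenvectors of the other eigenvalues, which
   together with phi_i span C^n. *)
From HB Require Import structures.
From mathcomp Require Import all_boot all_order all_algebra.
From mathcomp Require Import reals.
From mathcomp Require Import complex.
From mathcomp Require Import zify ring.
Set Implicit Arguments. Unset Strict Implicit.
Import Order.TTheory GRing.Theory Num.Theory.
Local Open Scope ring_scope.

Section DistinctEigenvalues.
Variables (F : fieldType) (n : nat) (g : 'M[F]_n) (lam : 'I_n -> F).
Variables (ph : 'I_n -> 'cV[F]_n) (ps : 'I_n -> 'rV[F]_n).
Hypothesis lam_inj : injective lam.
Hypothesis ph_eigen : forall i, g *m ph i = lam i *: ph i.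
Hypothesis ps_eigen : forall i, ps i *m g = lam i *: ps i.
Hypothesis ph_neq0 : forall i, ph i != 0.
Hypothesis ps_neq0 : forall i, ps i != 0.

Local Notation E i := (eigenspace g (lam i)).

Lemma eigenvec_sub_eigenspace i : (ps i <= E i)%MS.
Proof. exact/eigenspaceP. Qed.

Lemma sum_rank_eigenspace : (\sum_i \rank (E i))%N = \rank (\sum_i E i)%MS.
Proof.
have := @mxdirect_sum_eigenspace F _ n g predT lam (in2W lam_inj).
by rewrite mxdirectE => /eqP.
Qed.

Lemma rank_eigenspace_gt0 i : (0 < \rank (E i))%N.
Proof.
by apply: leq_trans (mxrankS (eigenvec_sub_eigenspace i)); rewrite rank_rV ps_neq0.
Qed.

(* n subspaces of positive rank in direct sum inside an n-dimensional space *)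
Lemma rank_eigenspace i : \rank (E i) = 1%N.
Proof.
have := rank_leq_col (\sum_j E j)%MS.
rewrite -sum_rank_eigenspace (bigD1 i) //=.
set others := (X in (_ + X)%N).
have : (n.-1 <= others)%N.
  have <- : #|predC1 i| = n.-1 by rewrite cardC1 card_ord.
  by rewrite -sum1_card; apply: leq_sum => j _; apply: rank_eigenspace_gt0.
have := rank_eigenspace_gt0 i; have : (0 < n)%N by case: (i) => i0; lia.
lia.
Qed.

Lemma row_full_sum_eigenspace : row_full (\sum_i E i)%MS.
Proof.
rewrite /row_full -sum_rank_eigenspace.
by under eq_bigr do rewrite rank_eigenspace; rewrite sum1_card card_ord.
Qed.

Lemma eigenspace_mul_eigenvec i j : i != j -> E i *m ph j = 0.
Proof.
move=> neq_ij.
have EiE : E i *m g = lam i *: E i by apply/eigenspaceP.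
have : (lam i - lam j) *: (E i *m ph j) = 0.
  by rewrite scalerBl scalemxAl -EiE -mulmxA ph_eigen -scalemxAr subrr.
move/eqP; rewrite scaler_eq0 subr_eq0 => /orP [/eqP /lam_inj /eqP|/eqP //].
by rewrite (negbTE neq_ij).
Qed.

(* psi_j is orthogonal to every phi_i with i != j, and the phi_i span F^n. *)
Lemma eigenvec_pairing_neq0 j : ps j *m ph j != 0.
Proof.
apply/negP => /eqP psph0.
have Ej_ps : (E j <= ps j)%MS.
  have [_ <-] := mxrank_leqif_sup (eigenvec_sub_eigenspace j).
  by rewrite rank_eigenspace rank_rV ps_neq0.
have E_ker i : (E i <= kermx (ph j))%MS.
  have [->|neq_ij] := eqVneq i j.
    by apply: submx_trans Ej_ps _; apply/sub_kermxP.
  exact/sub_kermxP/eigenspace_mul_eigenvec.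
have : (1%:M <= kermx (ph j))%MS.
  apply: submx_trans (submx_full _ row_full_sum_eigenspace) _.
  by apply/sumsmx_subP => i _; apply: E_ker.
by move/sub_kermxP; rewrite mul1mx; apply/eqP.
Qed.

End DistinctEigenvalues.

Lemma sum_normX_col_neq0 (C : numDomainType) m p (v : 'M[C]_(m, p)) (x : 'I_p) :
  \sum_(k < m) `|v k x| ^+ 2 = 1 -> v != 0.
Proof.
move=> norm1; apply/eqP => v0; move: norm1.
rewrite v0 big1 => [/eqP|k _]; last by rewrite mxE normr0 expr0n.
by rewrite eq_sym oner_eq0.
Qed.

Lemma theta_choiceE (R : realType) n (hphi : 'I_n -> 'cV[R[i]]_n)
    (hpsi : 'I_n -> 'rV[R[i]]_n) (sigma xi : 'I_n -> R[i]) j :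
  theta (choicePhi hphi sigma) (choicePsi hpsi xi) j
  = sigma j * xi j * (hpsi j *m hphi j) 0 0.
Proof.
rewrite /theta mxE mulr_sumr; apply: eq_bigr => k _; rewrite !mxE; ring.
Qed.

Section Rescaling.
Variables (R : realType) (n : nat) (a : forall N : nat, 'I_n -> N.-tuple 'I_n -> R).
Variables (lam : 'I_n -> R[i]) (Phi Psi Phi' Psi' : 'M[R[i]]_n) (T : 'I_n -> R[i]).
Hypothesis T_neq0 : forall i, T i != 0.
Hypothesis Phi'E : forall k i, Phi' k i = T i * Phi k i.
Hypothesis Psi'E : forall i k, Psi' i k = (T i)^-1 * Psi i k.

Lemma prod_T_neq0 N (r : N.-tuple 'I_n) : \prod_(t < N) T (tnth r t) != 0.
Proof. by apply/prodf_neq0 => t _; apply: T_neq0. Qed.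

Lemma hcoef_rescale N i (r : N.-tuple 'I_n) :
  hcoef a lam Phi' Psi' i r
  = hcoef a lam Phi Psi i r * (\prod_(t < N) T (tnth r t)) / T i.
Proof.
rewrite /hcoef; case: eqP => [eN|_].
  subst N; rewrite big_ord1 (tnth_nth i).
  by case: eqP => [->|_]; rewrite ?mul1r ?mulfV ?mul0r.
rewrite -[RHS]mulrA [RHS]mulrAC; congr (_ * _); rewrite mulr_suml.
apply: eq_bigr => j _; rewrite mulr_suml; apply: eq_bigr => al _.
rewrite Psi'E; under eq_bigr do rewrite Phi'E.
rewrite big_split /=; ring.
Qed.

Variables (Nmax : nat) (S : forall N : nat, {set N.-tuple 'I_n}) (alpha : R).

Lemma mu_rescale l k :
  mu a lam Phi' Psi' Nmax S alpha l k = (T l)^-1 * mu a lam Phi Psi Nmax S alpha l k.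
Proof.
rewrite /mu Psi'E mulrBr; congr (_ - _); first ring.
rewrite mulr_sumr; apply: eq_bigr => N _; rewrite mulrCA; congr (_ * _).
rewrite mulr_sumr; apply: eq_bigr => r _; rewrite hcoef_rescale.
rewrite (eq_bigr _ (fun t _ => Psi'E _ k)) big_split /= prodfV.
have := prod_T_neq0 r; have := T_neq0 l.
move: (\prod_(t < N) T (tnth r t)) (T l) => P Tl Tl_neq0 P_neq0.
by field; rewrite Tl_neq0 P_neq0.
Qed.

Lemma npf_rescale k M (r : M.-tuple 'I_n) :
  npf a lam Phi' Psi' Nmax S alpha k r = npf a lam Phi Psi Nmax S alpha k r.
Proof.
rewrite /npf; apply: eq_bigr => i _; rewrite Phi'E hcoef_rescale.
rewrite (eq_bigr _ (fun t _ => mu_rescale _ k)) big_split /= prodfV.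
have := prod_T_neq0 r; have := T_neq0 i.
move: (\prod_(t < M) T (tnth r t)) (T i) => P Ti Ti_neq0 P_neq0.
by field; rewrite Ti_neq0 P_neq0.
Qed.

End Rescaling.

Theorem theorem2 (R : realType) (n : nat)
  (A : 'M[R]_n) (a : forall N : nat, 'I_n -> N.-tuple 'I_n -> R)
  (lam : 'I_n -> R[i])
  (hphi : 'I_n -> 'cV[R[i]]_n) (hpsi : 'I_n -> 'rV[R[i]]_n)
  (Nmax : nat) (S : forall N : nat, {set N.-tuple 'I_n}) (alpha : R)
  (sigma xi sigma' xi' : 'I_n -> R[i]) :
  (* distinct eigenvalues, with right/left eigenvectors of unit 2-norm *)
  injective lam ->
  (forall i, map_mx (@toC R) A *m hphi i = lam i *: hphi i) ->
  (forall i, hpsi i *m map_mx (@toC R) A = lam i *: hpsi i) ->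
  (forall i, \sum_(k < n) `|hphi i k 0| ^+ 2 = 1) ->
  (forall i, \sum_(k < n) `|hpsi i 0 k| ^+ 2 = 1) ->
  (* truncation order and non-resonance *)
  (1 <= Nmax)%N ->
  (forall N : nat, (2 <= N <= Nmax)%N ->
     forall (i : 'I_n) (r : N.-tuple 'I_n), resdenom lam i r != 0) ->
  alpha != 0 ->
  (* two eigenvector choices *)
  (forall i, sigma i != 0) -> (forall i, xi i != 0) ->
  (forall i, sigma' i != 0) -> (forall i, xi' i != 0) ->
  (* equal theta-factors *)
  (forall j, theta (choicePhi hphi sigma) (choicePsi hpsi xi) j
             = theta (choicePhi hphi sigma') (choicePsi hpsi xi') j) ->
  forall (k : 'I_n) (M : nat), (1 <= M <= Nmax)%N ->
  forall r : M.-tuple 'I_n,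
    npf a lam (choicePhi hphi sigma) (choicePsi hpsi xi) Nmax S alpha k r
    = npf a lam (choicePhi hphi sigma') (choicePsi hpsi xi') Nmax S alpha k r.
Proof.
move=> lam_inj hphi_eigen hpsi_eigen hphi_norm hpsi_norm _ _ _
  sigma_neq0 _ sigma'_neq0 _ theta_eq k M _ r.
have hphi_neq0 i : hphi i != 0 := sum_normX_col_neq0 (hphi_norm i).
have hpsi_neq0 i : hpsi i != 0.
  rewrite -trmx_eq0; apply: (@sum_normX_col_neq0 _ _ _ _ 0).
  by under eq_bigr do rewrite mxE; apply: hpsi_norm.
have c_neq0 j : (hpsi j *m hphi j) 0 0 != 0.
  have := eigenvec_pairing_neq0 lam_inj hphi_eigen hpsi_eigen hphi_neq0 hpsi_neq0 j.
  by apply: contraNneq => c0; apply/eqP/matrixP => x y; rewrite !ord1 c0 mxE.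
have xi'E j : xi' j = sigma j * xi j / sigma' j.
  have := theta_eq j; rewrite !theta_choiceE => /(mulIf (c_neq0 j)) ->.
  by field; rewrite sigma'_neq0.
pose T j := sigma' j / sigma j.
have T_neq0 j : T j != 0 by rewrite mulf_neq0 ?invr_eq0.
have Phi'E k' i : choicePhi hphi sigma' k' i = T i * choicePhi hphi sigma k' i.
  by rewrite /T !mxE; field; rewrite sigma_neq0.
have Psi'E i k' : choicePsi hpsi xi' i k' = (T i)^-1 * choicePsi hpsi xi i k'.
  by rewrite /T !mxE xi'E; field; rewrite sigma_neq0 sigma'_neq0.
by rewrite (npf_rescale a lam T_neq0 Phi'E Psi'E).
Qed.
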